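(* Suppose that $\|\tilde{\mu}_{m}-\mu\|_\infty=\mathcal{O}_{\mathrm{P}}(a_m)$ and $\|\tilde{\pi}_{m}-\pi\|_\infty=\mathcal{O}_{\mathrm{P}}(a_m)$ for sufficiently large $m$, where $\{a_m\}$ is a deterministic sequence with $a_m\to 0$. Suppose in addition that, for sufficiently large $m$ and conditionally on $\tilde{\mu}_{m}(\cdot)$, the joint density $b_m(x,u)$ of $(\mu(Z),\eta_m(Z))$, where $\eta_m=a_m^{-1}(\tilde{\mu}_{m}-\mu)$, and its partial derivatives $\partial_x b_m(x,u)$, $\partial_x^2 b_m(x,u)$ exist for all $x,u$ and there are non-negative functions $\bar b_{m,i}(u)$, $i=0,1,2$, with $b_m(x,u)\le \bar b_{m,0}(u)$, $|\partial_x b_m(x,u)|\le \bar b_{m,1}(u)$, $|\partial_x^2 b_m(x,u)|\le \bar b_{m,2}(u)$ for all $x,u$ and $\sup_m\int_{\mathbb{R}}|u|^r\bar b_{m,i}(u)\,du<\infty$ for $r=0,1,2,3$ and $i=0,1,2$. Suppose also that $f_\mu(q)>0$. Then $\mathcal{F}_q[\tilde{\mu}_{m}]-\mathcal{F}_q[\mu]=\mathcal{O}_{\mathrm{P}}(a_m)$.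
   Context: $Z$ denotes the risk factors, $\mu(z)=\mathrm{E}[X\mid Z=z]$, $\pi(z)=\mathrm{E}[Y\mid Z=z]$, and $\tilde{\mu}_{m},\tilde{\pi}_{m}$ are first-stage fitted approximations from $m$ outer-level scenarios. $\|\cdot\|_\infty$ is the essential supremum norm. $q$ is the $\alpha$-VaR of $\mu(Z)$ and $f_\mu$ the density of $\mu(Z)$. For a function $g$, the functional $\mathcal{F}_x[g]$ is the distribution function of $g(Z)$ at $x$, conditional on the fitted functions: $\mathcal{F}_x[g]=\mathrm{Pr}_m\{g(Z)\le x\}$; thus $\mathcal{F}_q[\mu]=\Pr\{\mu(Z)\le q\}$ and $\mathcal{F}_q[\tilde{\mu}_{m}]=\mathrm{Pr}_m\{\tilde{\mu}_{m}(Z)\le q\}$. *)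

From HB Require Import structures.
From mathcomp Require Import all_boot all_order all_algebra.
From mathcomp Require Import all_classical all_reals all_analysis ess_sup_inf.
Set Implicit Arguments. Unset Strict Implicit. Unset Printing Implicit Defensive.
Import Order.TTheory GRing.Theory Num.Theory.
Import numFieldNormedType.Exports.
Local Open Scope classical_set_scope.
Local Open Scope ring_scope.

Section defs.
Context {R : realType}.

(* Big-O in probability (outer-probability version, so that no measurability
   of the events is presupposed): X_m = O_P(a_m) iff for every eps > 0 there
   are M > 0 and N such that for all m >= N, the event {|X_m| > M a_m} is
   contained in a measurable event of probability < eps. *)
Definition OPe {d} {Om : measurableType d} (P : probability Om R)
  (X : nat -> Om -> \bar R) (a : nat -> R) : Prop :=
  forall eps : R, 0 < eps -> exists M : R, 0 < M /\ exists N : nat,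
    forall m, (N <= m)%N -> exists A : set Om, measurable A /\
      [set w | ((M * a m)%:E < `|X m w|)%E] `<=` A /\ (P A < eps%:E)%E.

Definition OP {d} {Om : measurableType d} (P : probability Om R)
  (X : nat -> Om -> R) (a : nat -> R) : Prop :=
  OPe P (fun m w => (X m w)%:E) a.

Definition esssup_norm {d} {T : measurableType d} (PZ : probability T R)
  (g : T -> R) : \bar R := ess_sup PZ (fun z => (`|g z|)%:E).

Definition distF {d} {T : measurableType d} (PZ : probability T R)
  (x : R) (g : T -> R) : R := fine (PZ [set z | g z <= x]).

Definition VaR {d} {T : measurableType d} (PZ : probability T R)
  (X : T -> R) (alpha : R) : R :=
  inf [set x : R | (alpha%:E <= PZ [set z | (X z <= x)%R])%E].

Definition is_density {d} {T : measurableType d} (PZ : probability T R)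
  (X : T -> R) (f : R -> R) : Prop :=
  (forall x, 0 <= f x) /\ measurable_fun setT f /\
  forall A : set R, measurable A ->
    PZ (X @^-1` A) = (\int[@lebesgue_measure R]_(x in A) (f x)%:E)%E.

Definition is_joint_density {d} {T : measurableType d} (PZ : probability T R)
  (X Y : T -> R) (b : R -> R -> R) : Prop :=
  (forall x u, 0 <= b x u) /\
  measurable_fun (@setT (R * R)%type) (fun p => b p.1 p.2) /\
  forall A : set (R * R)%type, measurable A ->
    PZ [set z | A (X z, Y z)] =
    (\int[(@lebesgue_measure R \x @lebesgue_measure R)%E]_(p in A) (b p.1 p.2)%:E)%E.

Definition dx (b : R -> R -> R) (x u : R) : R := derive1 (fun y => b y u) x.
Definition dx2 (b : R -> R -> R) (x u : R) : R := derive1 (fun y => dx b y u) x.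

End defs.

(* The indicators of {mu~_m(Z) <= q} and {mu(Z) <= q} can only differ when
   |mu(Z) - q| <= |mu~_m(Z) - mu(Z)| = a_m |eta_m(Z)|.  Integrating the joint
   density of (mu(Z), eta_m(Z)) first in x over the band |x - q| <= a_m |u|
   bounds the probability of that event by 2 a_m \int |u| bbar_{m,0}(u) du,
   which is O(a_m) uniformly in m and in the outer scenarios.  The bound is
   deterministic, so it holds a fortiori in probability. *)

From HB Require Import structures.
From mathcomp Require Import all_boot all_order all_algebra.
From mathcomp Require Import all_classical all_reals all_analysis ess_sup_inf.
From mathcomp Require Import measurable_realfun.
From mathcomp Require Import ring lra.
Set Implicit Arguments. Unset Strict Implicit. Unset Printing Implicit Defensive.
Import Order.TTheory GRing.Theory Num.Theory.
Import numFieldNormedType.Exports.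
Local Open Scope classical_set_scope.
Local Open Scope ring_scope.

Lemma measurable_ler d (T : measurableType d) (R : realType) (f g : T -> R) :
  measurable_fun setT f -> measurable_fun setT g ->
  measurable [set z | f z <= g z].
Proof.
move=> mf mg.
have := measurable_fun_ler mf mg measurableT (Y := [set true]).
by rewrite setTI preimage_true; apply.
Qed.

Lemma ler_dist_threshold (R : realDomainType) (x y q : R) :
  (x <= q) != (y <= q) -> `|y - q| <= `|x - y|.
Proof.
have [yq|qy] := leP y q; have [xq|qx] := leP x q => //= _.
- by rewrite ler0_norm ?subr_le0 // gtr0_norm ?subr_gt0 //; lra.
- by rewrite gtr0_norm ?subr_gt0 // ltr0_norm ?subr_lt0 //; lra.
Qed.

Lemma fine_measure_dist_le d (T : measurableType d) (R : realType)
    (mu : {finite_measure set T -> \bar R}) (A B S : set T) :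
  measurable A -> measurable B -> measurable S ->
  A `<=` B `|` S -> B `<=` A `|` S ->
  (`|fine (mu A) - fine (mu B)|%:E <= mu S)%E.
Proof.
move=> mA mB mS AB BA.
have leU C D : measurable C -> measurable D -> C `<=` D `|` S ->
    (mu C <= mu D + mu S)%E.
  move=> mC mD CD; apply: le_trans (measureU2 _ mD mS).
  by apply: le_measure; rewrite ?inE //; exact: measurableU.
have := leU _ _ mA mB AB; have := leU _ _ mB mA BA.
rewrite -(fineK (fin_num_measure _ _ mA)) -(fineK (fin_num_measure _ _ mB)).
rewrite -(fineK (fin_num_measure _ _ mS)) -!EFinD !lee_fin => hB hA.
by rewrite ler_norml; apply/andP; split; lra.
Qed.

Lemma distF_dist_le d (T : measurableType d) (R : realType)
    (PZ : probability T R) (f g : T -> R) (q : R) :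
  measurable_fun setT f -> measurable_fun setT g ->
  (`|distF PZ q f - distF PZ q g|%:E <=
    PZ [set z | (`|g z - q| <= `|f z - g z|)%R])%E.
Proof.
move=> mf mg; apply: fine_measure_dist_le.
- exact: measurable_ler mf (measurable_cst _).
- exact: measurable_ler mg (measurable_cst _).
- apply: measurable_ler.
    exact: measurableT_comp (@normr_measurable _ _) (measurable_funB mg (measurable_cst _)).
  exact: measurableT_comp (@normr_measurable _ _) (measurable_funB mf mg).
- move=> z /= fzq; have [gzq|gzq] := boolP (g z <= q); first by left.
  by right; apply: ler_dist_threshold; rewrite fzq (negbTE gzq).
- move=> z /= gzq; have [fzq|fzq] := boolP (f z <= q); first by left.
  by right; apply: ler_dist_threshold; rewrite gzq (negbTE fzq).
Qed.

Lemma set_dist_le_itv (R : realDomainType) (q r : R) :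
  [set x : R | `|x - q| <= r] = `[q - r, q + r]%classic.
Proof. by apply/seteqP; split => x; rewrite /= in_itv /= ler_distl. Qed.

Lemma lebesgue_measure_dist_le (R : realType) (q r : R) : 0 <= r ->
  lebesgue_measure [set x : R | `|x - q| <= r] = (r *+ 2)%:E.
Proof.
move=> r0; rewrite set_dist_le_itv lebesgue_measure_itv /= lte_fin.
case: ltP => [_|]; first by rewrite -EFinD; congr (_%:E); lra.
by move=> rq; congr (_%:E); lra.
Qed.

Lemma measurable_band (R : realType) (q c : R) :
  measurable [set p : R * R | `|p.1 - q| <= c * `|p.2|].
Proof.
apply: measurable_ler.
  exact: measurableT_comp (@normr_measurable _ _)
    (measurable_funB measurable_fst (measurable_cst _)).
exact: measurable_funM (measurable_cst _)
  (measurableT_comp (@normr_measurable _ _) measurable_snd).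
Qed.

Lemma integral_band_section (R : realType) (q c u : R) (h : R -> R) : 0 <= c ->
  (\int[@lebesgue_measure R]_x
     (((fun p : R * R => (h p.2)%:E) \_
        [set p : R * R | (`|p.1 - q| <= c * `|p.2|)%R]) (x, u)))%E
  = ((c *+ 2) * (`|u| * h u))%:E.
Proof.
move=> c0; set I := [set x : R | `|x - q| <= c * `|u|].
have mI : measurable I by rewrite /I set_dist_le_itv; exact: measurable_itv.
transitivity (\int[@lebesgue_measure R]_(x in I) (cst (h u)%:E) x)%E.
  rewrite [RHS]integral_mkcond; apply: eq_integral => x _.
  by rewrite /patch; congr (if _ then _ else _); apply/idP/idP => /set_mem.
rewrite integral_cst // [X in (_ * X)%E](_ : _ = @lebesgue_measure R I) //.
rewrite lebesgue_measure_dist_le ?mulr_ge0 //.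
by rewrite -EFinM; congr (_%:E); rewrite mulrnAl; ring.
Qed.

Lemma prob_band_le d (T : measurableType d) (R : realType) (PZ : probability T R)
    (X Y : T -> R) (bj : R -> R -> R) (bb : R -> R) (q c : R) :
  0 <= c -> is_joint_density PZ X Y bj ->
  (forall x u, bj x u <= bb u) -> (forall u, 0 <= bb u) ->
  measurable_fun setT bb ->
  (PZ [set z | (`|X z - q| <= c * `|Y z|)%R] <=
    (c *+ 2)%:E * \int[@lebesgue_measure R]_u (`|u| * bb u)%:E)%E.
Proof.
move=> c0 [bj0 [mbj PZE]] bj_le bb0 mbb.
set D := [set p : R * R | `|p.1 - q| <= c * `|p.2|].
have mD : measurable D by exact: measurable_band.
rewrite -[S in PZ S]/[set z | D (X z, Y z)] PZE //.
have mbb2 : measurable_fun setT (fun p : R * R => (bb p.2)%:E).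
  by apply/measurable_EFinP; exact: measurableT_comp mbb measurable_snd.
apply: (@le_trans _ _
  (\int[(@lebesgue_measure R \x @lebesgue_measure R)%E]_(p in D) (bb p.2)%:E)%E).
  apply: ge0_le_integral => //.
  - by move=> p _; rewrite lee_fin.
  - exact/measurable_funTS/measurable_EFinP.
  - exact: measurable_funTS.
  - by move=> p _; rewrite lee_fin.
rewrite integral_mkcond fubini_tonelli2 /fubini_G; last 2 first.
  - by apply/(measurable_restrictT _ mD); exact: measurable_funTS mbb2.
  - by move=> p; rewrite /patch; case: ifP => // _; rewrite lee_fin.
under eq_integral => u _ do rewrite integral_band_section // EFinM.
rewrite ge0_integralZl //.
- by apply/measurable_EFinP; exact: measurable_funM (@normr_measurable _ _) mbb.
- by move=> u _; rewrite lee_fin mulr_ge0.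
- by rewrite lee_fin mulrn_wge0.
Qed.

Lemma distF_perturb_le d (T : measurableType d) (R : realType)
    (PZ : probability T R) (f g : T -> R) (bj : R -> R -> R) (bb : R -> R)
    (q c C : R) :
  measurable_fun setT f -> measurable_fun setT g -> 0 < c ->
  is_joint_density PZ f (fun z => c^-1 * (g z - f z)) bj ->
  (forall x u, bj x u <= bb u) -> (forall u, 0 <= bb u) ->
  measurable_fun setT bb ->
  (\int[@lebesgue_measure R]_u (`|u| * bb u)%:E <= C%:E)%E ->
  `|distF PZ q g - distF PZ q f| <= C *+ 2 * c.
Proof.
move=> mf mg c0 jd bj_le bb0 mbb intC.
rewrite -lee_fin; apply: le_trans (distF_dist_le PZ q mg mf) _.
have -> : [set z | `|f z - q| <= `|g z - f z|] =
          [set z | `|f z - q| <= c * `|c^-1 * (g z - f z)|].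
  by apply: eq_set => z; rewrite normrM ger0_norm ?invr_ge0 ?(ltW c0) // mulVKf ?gt_eqF.
apply: le_trans (prob_band_le q (ltW c0) jd bj_le bb0 mbb) _.
rewrite (mulrC (C *+ 2)) mulrnAr -mulrnAl EFinM lee_wpmul2l //.
by rewrite lee_fin mulrn_wge0 // ltW.
Qed.

Lemma OP_of_bound d (Om : measurableType d) (R : realType) (P : probability Om R)
    (X : nat -> Om -> R) (a : nat -> R) (C : R) (N : nat) :
  (forall m, 0 <= a m) -> (forall m, (N <= m)%N -> forall w, `|X m w| <= C * a m) ->
  OP P X a.
Proof.
move=> a0 X_le eps eps0; exists (Num.max C 0 + 1); split.
  by rewrite ltr_pwDr // le_max lexx orbT.
exists N => m Nm; exists set0; split; first exact: measurable0.
split; last by rewrite measure0.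
move=> w /=; rewrite lte_fin; apply/negP; rewrite -leNgt.
apply: le_trans (X_le m Nm w) _; rewrite ler_wpM2r //.
by rewrite (@le_trans _ _ (Num.max C 0)) ?le_max ?lexx // lerDl.
Qed.
Theorem lemma2 (R : realType)
  (d1 : measure_display) (Om : measurableType d1) (P : probability Om R)
  (d2 : measure_display) (T : measurableType d2) (PZ : probability T R)
  (mu pi : T -> R) (mut pit : nat -> Om -> T -> R) (a : nat -> R)
  (alpha q : R) (fmu : R -> R)
  (b : nat -> Om -> R -> R -> R) :
  measurable_fun setT mu -> measurable_fun setT pi ->
  (forall m w, measurable_fun setT (mut m w)) ->
  (forall m w, measurable_fun setT (pit m w)) ->
  (forall m, 0 < a m) -> a @ \oo --> 0 ->
  OPe P (fun m w => esssup_norm PZ (fun z => mut m w z - mu z)) a ->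
  OPe P (fun m w => esssup_norm PZ (fun z => pit m w z - pi z)) a ->
  (exists N : nat, forall m, (N <= m)%N -> forall w : Om,
     is_joint_density PZ mu (fun z => (a m)^-1 * (mut m w z - mu z)) (b m w) /\
     (forall x u, derivable (fun y => b m w y u) x 1) /\
     (forall x u, derivable (fun y => dx (b m w) y u) x 1)) ->
  (exists N : nat, exists bbar : nat -> Om -> nat -> R -> R, exists C : R,
     forall m, (N <= m)%N -> forall w : Om,
       (forall i u, 0 <= bbar m w i u) /\
       (forall i, measurable_fun setT (bbar m w i)) /\
       (forall x u, b m w x u <= bbar m w 0%N u) /\
       (forall x u, `|dx (b m w) x u| <= bbar m w 1%N u) /\
       (forall x u, `|dx2 (b m w) x u| <= bbar m w 2%N u) /\
       (forall (r i : nat), (r <= 3)%N -> (i <= 2)%N ->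
          (\int[@lebesgue_measure R]_(u in setT) (`|u| ^+ r * bbar m w i u)%:E
             <= C%:E)%E)) ->
  0 < alpha < 1 -> q = VaR PZ mu alpha ->
  is_density PZ mu fmu -> 0 < fmu q ->
  OP P (fun m w => distF PZ q (mut m w) - distF PZ q mu) a.
Proof.
move=> mmu _ mmut _ a_gt0 _ _ _ [N1 jd] [N2 [bbar [C bbar_spec]]] _ _ _ _.
apply: (OP_of_bound P (C := C *+ 2) (N := maxn N1 N2)) => [m|m Nm w].
  exact: ltW.
have [jdm _] := jd m (leq_trans (leq_maxl _ _) Nm) w.
have [bb0 [mbb [b_le [_ [_ mom]]]]] := bbar_spec m (leq_trans (leq_maxr _ _) Nm) w.
have mom1 : (\int[@lebesgue_measure R]_u (`|u| * bbar m w 0%N u)%:E <= C%:E)%E.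
  by have := mom 1%N 0%N erefl erefl; under eq_integral do rewrite expr1.
exact: distF_perturb_le mmu (mmut m w) (a_gt0 m) jdm b_le (bb0 0%N) (mbb 0%N) mom1.
Qed.
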